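(* Let $(\mathbb{X},d_{\mathbb{X}})$ and $(\Xi,d_\Xi)$ be metric spaces, and let $P$, $P^\nu$ ($\nu\in\mathbb{N}$) be probability measures on $(\Xi,\mathcal{B}(\Xi))$ with $P^\nu$ converging weakly to $P$. Let $f,f^\nu:\Xi\times\mathbb{X}\to\overline{\mathbb{R}}$ satisfy, for each $x\in\mathbb{X}$: (a) $f(\cdot,x)$ and $f^\nu(\cdot,x)$, $\nu\in\mathbb{N}$, are measurable; (b) $\displaystyle\liminf_{K\to+\infty}\ \liminf_{(\nu,y)\to(+\infty,x)}\mathbb{E}^{P^\nu}\big[f^\nu(\xi,y)\,\mathbb{1}\{\xi:f^\nu(\xi,y)\le -K\}\big]=0$; (c) for $P$-a.e. $\xi\in\Xi$, $\displaystyle\liminf_{(\nu,y,\zeta)\to(+\infty,x,\xi)}f^\nu(\zeta,y)\ge f(\xi,x)$. Suppose moreover that for each $x\in\mathbb{X}$ either $E^P[f](x)=+\infty$ or there exists a sequence $\{x^\nu\}_{\nu\in\mathbb{N}}\subset\mathbb{X}$ converging to $x$ such that (i) $\displaystyle\limsup_{K\to+\infty}\ \limsup_{\nu\to+\infty}\mathbb{E}^{P^\nu}\big[f^\nu(\xi,x^\nu)\,\mathbb{1}\{\xi:f^\nu(\xi,x^\nu)\ge K\}\big]=0$; (ii) for $P$-a.e. $\xi\in\Xi$, $\displaystyle\limsup_{(\nu,\zeta)\to(+\infty,\xi)}f^\nu(\zeta,x^\nu)\le f(\xi,x)$. Then the functions $E^{P^\nu}[f^\nu]$ epi-converge to $E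^{P}[f]$.
   Context: $\overline{\mathbb{R}}=\mathbb{R}\cup\{-\infty,+\infty\}$; weak convergence means $\int\varphi\,dP^\nu\to\int\varphi\,dP$ for all bounded continuous $\varphi$. For a probability $\mu$ and measurable $\overline{\mathbb{R}}$-valued $g$, $\mathbb{E}^\mu[g]:=\int g_+\,d\mu-\int g_-\,d\mu$ with conventions $+\infty-\alpha=+\infty$ for all $\alpha\in\overline{\mathbb{R}}$ and $\beta-(+\infty)=-\infty$ for $\beta\in\mathbb{R}$; $E^{Q}[h](x):=\mathbb{E}^{Q}[h(\xi,x)]$. $\mathbb{1}\{B\}$ is the indicator. Lower/upper limits: $\liminf_{(\nu,y)\to(+\infty,x)}a^\nu(y):=\lim_{\delta\downarrow0}\lim_{N\to\infty}\inf\{a^\nu(y):\nu\ge N, d_{\mathbb{X}}(y,x)<\delta\}$; $\liminf_{(\nu,y,\zeta)\to(+\infty,x,\xi)}f^\nu(\zeta,y)$ is defined analogously with $d_{\mathbb{X}}(y,x)<\delta$ and $d_\Xi(\zeta,\xi)<\delta$; $\limsup_{(\nu,\zeta)\to(+\infty,\xi)}a^\nu(\zeta):=\lim_{\delta\downarrow0}\lim_{N\to\infty}\sup\{a^\nu(\zeta):\nu\ge N, d_\Xi(\zeta,\xi)<\delta\}$. Functions $h^\nu:\mathbb{X}\to\overline{\mathbb{R}}$ epi-converge to $h$ if for every $x$: for every $x^\nu\to x$, $h(x)\le\liminf_\nu h^\nu(x^\nu)$, and there exists $x^\nu\to x$ with $h^\nu(x^\nu)\to h(x)$. *)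

From HB Require Import structures.
From mathcomp Require Import all_boot all_order all_algebra.
From mathcomp Require Import all_classical all_reals all_analysis measurable_realfun.
Set Implicit Arguments. Unset Strict Implicit. Unset Printing Implicit Defensive.
Import Order.TTheory GRing.Theory Num.Theory.
Import numFieldNormedType.Exports.
Local Open Scope classical_set_scope.
Local Open Scope ring_scope.

Definition is_metric {R : realType} {T : Type} (d : T -> T -> R) : Prop :=
  [/\ (forall x y, 0 <= d x y), (forall x y, d x y = 0 <-> x = y),
      (forall x y, d x y = d y x) & (forall x y z, d x z <= d x y + d y z)].

Definition dopen {R : realType} {T : Type} (d : T -> T -> R) : set (set T) :=
  fun A => forall x, A x -> exists2 e, 0 < e & forall y, d y x < e -> A y.

Definition borel_type {R : realType} {T : pointedType} (d : T -> T -> R) :=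
  g_sigma_algebraType (dopen d).

Definition dcontinuous {R : realType} {T : Type} (d : T -> T -> R) (phi : T -> R) :=
  forall x e, 0 < e -> exists2 del, 0 < del & forall y, d y x < del -> `|phi y - phi x| < e.

Definition dconv {R : realType} {T : Type} (d : T -> T -> R) (xs : nat -> T) (x : T) :=
  d (xs n) x @[n --> \oo] --> (0 : R).

Local Open Scope ereal_scope.

Definition weak_conv {R : realType} {T : pointedType} (d : T -> T -> R)
  (Pn : nat -> probability (borel_type d) R) (P : probability (borel_type d) R) :=
  forall phi : T -> R, dcontinuous d phi -> (exists M : R, forall x, (`|phi x| <= M)%R) ->
    (\int[Pn n]_(x in [set: borel_type d]) (phi x)%:E) @[n --> \oo] -->
    \int[P]_(x in [set: borel_type d]) (phi x)%:E.

Definition Eexp {R : realType} {T : pointedType} {d : T -> T -> R}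
  (mu : probability (borel_type d) R) (g : T -> \bar R) : \bar R :=
  let a := \int[mu]_(x in [set: borel_type d]) (g^\+ x) in
  let b := \int[mu]_(x in [set: borel_type d]) (g^\- x) in
  if a == +oo then +oo else a - b.

Definition trunc_le {R : realType} (v : \bar R) (K : R) : \bar R :=
  if v <= (- K)%:E then v else 0.
Definition trunc_ge {R : realType} (v : \bar R) (K : R) : \bar R :=
  if K%:E <= v then v else 0.

(* liminf_{K -> +oo} g K  and  limsup_{K -> +oo} g K  (K real) ;
   lim_{K} inf_{K' >= K} = sup_K inf_{K' >= K} by monotonicity *)
Definition liminf_K {R : realType} (g : R -> \bar R) : \bar R :=
  ereal_sup [set ereal_inf [set g K' | K' in [set K' | (K <= K')%R]] | K in [set: R]].
Definition limsup_K {R : realType} (g : R -> \bar R) : \bar R :=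
  ereal_inf [set ereal_sup [set g K' | K' in [set K' | (K <= K')%R]] | K in [set: R]].

(* liminf_{(nu,y) -> (+oo,x)} a^nu(y)
   = lim_{del↓0} lim_N inf{a^nu(y) : nu >= N, d(y,x) < del}; both limits are
   monotone, hence equal to suprema. *)
Definition liminf_ny {R : realType} {X : Type} (dX : X -> X -> R)
  (a : nat -> X -> \bar R) (x : X) : \bar R :=
  ereal_sup [set e | exists del N, (0 < del)%R /\
    e = ereal_inf [set v | exists n y, [/\ (N <= n)%N, (dX y x < del)%R & v = a n y]]].

Definition liminf_nyz {R : realType} {X Xi : Type} (dX : X -> X -> R)
  (dXi : Xi -> Xi -> R) (fn : nat -> Xi -> X -> \bar R) (x : X) (xi : Xi) : \bar R :=
  ereal_sup [set e | exists del N, (0 < del)%R /\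
    e = ereal_inf [set v | exists n y z,
      [/\ (N <= n)%N, (dX y x < del)%R, (dXi z xi < del)%R & v = fn n z y]]].

Definition limsup_nz {R : realType} {Xi : Type} (dXi : Xi -> Xi -> R)
  (a : nat -> Xi -> \bar R) (xi : Xi) : \bar R :=
  ereal_inf [set e | exists del N, (0 < del)%R /\
    e = ereal_sup [set v | exists n z, [/\ (N <= n)%N, (dXi z xi < del)%R & v = a n z]]].

Definition epi_converges {R : realType} {X : Type} (dX : X -> X -> R)
  (h : nat -> X -> \bar R) (g : X -> \bar R) : Prop :=
  forall x,
    (forall xs : nat -> X, dconv dX xs x -> g x <= limn_einf (fun n => h n (xs n))) /\
    (exists2 xs : nat -> X, dconv dX xs x & h n (xs n) @[n --> \oo] --> g x).

(* Lower bound.  Clamp [fn] to [[-K, M]]: the expectation of [fn] is at least that of the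
   clamped function plus that of the lower tail [fn 1{fn <= -K}], and (b) makes the latter at
   least [-eps] for [K] large.  By (c) the clamped [f] lies below the joint liminf of the clamped
   [fn].  For such a bounded family [u_n], the regularizations
   [infconv m x = inf_{n >= m, z} u_n z + m d(x, z)] are Lipschitz, lie below [u_n] for [n >= m]
   and increase to a function above [u] almost everywhere; weak convergence applied to each of
   them, then monotone convergence in [m], gives [liminf_n E^{P^n}[clamped fn] >= E^P[clamped f]].
   Finally [E^P[clamped f]] tends to [E^P[f]] as [M] grows.
   Upper bound.  Symmetrically along the recovery sequence, with (i) and (ii) in place of (b)
   and (c); when [E^P[f] = +oo] the constant sequence is a recovery sequence. *)

From mathcomp Require Import all_boot all_order all_algebra.
From mathcomp Require Import all_classical all_reals all_analysis measurable_realfun.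
From mathcomp Require Import lra.
Set Implicit Arguments. Unset Strict Implicit. Unset Printing Implicit Defensive.
Import Order.TTheory GRing.Theory Num.Theory.
Import numFieldNormedType.Exports.
Local Open Scope classical_set_scope.
Local Open Scope ring_scope.
Local Open Scope ereal_scope.

Section ereal_limits.
Context {R : realType}.
Implicit Types (u : (\bar R)^nat) (l x y : \bar R).

Lemma ereal_dense x y : x < y -> exists t : R, x < t%:E < y.
Proof.
case: x => [s| |]; case: y => [r| |] //=.
- by rewrite lte_fin => sr; exists ((s + r) / 2)%R; rewrite !lte_fin; apply/andP; split; lra.
- by move=> _; exists (s + 1)%R; rewrite !lte_fin ltry andbT; lra.
- by move=> _; exists (r - 1)%R; rewrite lte_fin ltNyr /=; lra.
- by move=> _; exists 0%R; rewrite ltNyr ltry.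
Qed.

Lemma lee_reals l x : (forall t : R, t%:E < l -> t%:E <= x) -> l <= x.
Proof.
move=> H; rewrite leNgt; apply/negP => /ereal_dense [t /andP[xt tl]].
by have := H t tl; rewrite leNgt xt.
Qed.

Lemma limn_einf_ge u l :
  (forall t : R, t%:E < l -> \forall n \near \oo, t%:E <= u n) -> l <= limn_einf u.
Proof.
move=> H; apply: lee_reals => t /H [N _ HN].
rewrite limn_einf_lim (cvg_lim _ (ereal_nondecreasing_cvgn (nondecreasing_einfs u))) //.
apply: (@le_trans _ _ (einfs u N)); last by apply: ereal_sup_ubound; exists N.
by apply/ereal_infP => _ [k /= Nk <-]; exact: HN.
Qed.

Lemma cvgn_ereal_squeeze u l :
  (forall t : R, t%:E < l -> \forall n \near \oo, t%:E <= u n) ->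
  (forall t : R, l < t%:E -> \forall n \near \oo, u n <= t%:E) ->
  u @ \oo --> l.
Proof.
case: l => [r| |] Hlo Hup; last 2 first.
- by apply/cvgeyPge => A; exact: Hlo (ltry A).
- by apply/cvgeNyPle => A; exact: Hup (ltNyr A).
have near_r e : (0 < e)%R ->
    \forall n \near \oo, ((r - e)%:E <= u n) && (u n <= (r + e)%:E).
  move=> e0; have := Hlo (r - e)%R; have := Hup (r + e)%R; rewrite !lte_fin.
  move=> /(_ ltac:(lra)) hup /(_ ltac:(lra)) hlo.
  by apply: filterS2 hlo hup => n -> ->.
apply/fine_cvgP; split.
  apply: filterS (near_r 1%R ltr01) => n /andP[lo up].
  by rewrite fin_numElt (lt_le_trans _ lo) ?ltNyr // (le_lt_trans up) ?ltry.
apply/cvgrPdist_le => e /near_r; apply: filterS => n /andP[].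
case E: (u n) => [s| |] //=; rewrite !lee_fin => lo up.
by rewrite /= E /= distrC ler_norml; apply/andP; split; lra.
Qed.

Lemma cvgn_gt u l c : u @ \oo --> l -> c < l -> \forall n \near \oo, c < u n.
Proof.
move=> cu /ereal_dense [t /andP[ct tl]].
suff : \forall n \near \oo, t%:E < u n by apply: filterS => n; exact: lt_trans.
case: l cu tl => [r| |] // cu tl; last by move/cvgeyPgt : cu; apply.
have /fine_cvgP[ufin /cvgrPdist_lt cu'] := cu.
rewrite lte_fin -subr_gt0 in tl.
apply: filterS2 ufin (cu' _ tl) => n nfin.
by rewrite -(fineK nfin) lte_fin ltr_norml /= => /andP[h1 h2]; lra.
Qed.

Lemma limn_esup_lt u c : limn_esup u < c -> \forall n \near \oo, u n < c.
Proof.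
rewrite limn_esup_lim (cvg_lim _ (ereal_nonincreasing_cvgn (nonincreasing_esups u))) //.
move=> /ereal_inf_ltP [_ [N _ <-] hN]; exists N => // n /= Nn.
by apply: le_lt_trans hN; apply: ereal_sup_ubound; exists n.
Qed.

End ereal_limits.

Section clamp.
Context {R : realType}.
Implicit Types (a b r K M : R) (v : \bar R).

Definition clamp a b v : R :=
  match v with
  | r%:E => if (r <= a)%R then a else if (b <= r)%R then b else r
  | +oo => b
  | -oo => a
  end.

Lemma clamp_itv a b v : (a <= b)%R -> (a <= clamp a b v <= b)%R.
Proof.
move=> ab; case: v => [r| |] /=; rewrite ?lexx ?ab //.
by case: (leP r a) => ra; case: (leP b r) => br; rewrite ?lexx ?ab //; apply/andP; split; lra.
Qed.

Lemma clampE a b v : (a <= b)%R -> (clamp a b v)%:E = mine b%:E (maxe a%:E v).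
Proof.
move=> ab; case: v => [r| |] /=; last 2 first.
- by rewrite (max_idPr (leey _)) (min_idPl (leey _)).
- by rewrite (max_idPl (leNye _)) (min_idPr _) // lee_fin.
rewrite -EFin_max -EFin_min; congr EFin.
by case: (leP r a) => ra; case: (leP b r) => br; repeat case: leP => ?; lra.
Qed.

Lemma measurable_clamp d (T : measurableType d) a b (g : T -> \bar R) : (a <= b)%R ->
  measurable_fun setT g -> measurable_fun setT (fun x => clamp a b (g x)).
Proof.
move=> ab mg; rewrite (_ : (fun x => _) = fine \o (fun x => mine b%:E (maxe a%:E (g x)))).
  by apply: measurableT_comp => //; apply: measurable_mine => //; exact: measurable_maxe.
by apply/funext => x /=; rewrite -clampE.
Qed.

Lemma clamp_gtP a b r v : (a <= b)%R -> (a <= r)%R ->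
  (r < clamp a b v)%R <-> (r < b)%R /\ r%:E < v.
Proof.
move=> ab ar; case: v => [s| |] /=; rewrite ?lte_fin ?ltry ?ltNge ?leNye.
- by case: (leP s a) => ?; case: (leP b s) => ?; split => [?|[]]; try split; lra.
- by split => [|[]].
- by split => [|[]//]; lra.
Qed.

Lemma clamp_ltP a b r v : (a <= b)%R -> (r <= b)%R ->
  (clamp a b v < r)%R <-> (a < r)%R /\ v < r%:E.
Proof.
move=> ab rb; case: v => [s| |] /=; rewrite ?lte_fin ?ltNyr ?ltNge ?leey.
- by case: (leP s a) => ?; case: (leP b s) => ?; split => [?|[]]; try split; lra.
- by split => [|[]//]; lra.
- by split => [|[]].
Qed.

Lemma clamp_funepos K M v : (0 <= K)%R -> (0 <= M)%R ->
  maxe (clamp (- K) M v)%:E 0 = mine M%:E (maxe v 0).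
Proof.
move=> K0 M0; case: v => [r| |] /=.
- rewrite -!EFin_max -EFin_min; congr EFin.
  by case: (leP r (- K)%R) => ?; case: (leP M r) => ?; repeat case: leP => ?; lra.
- by rewrite (max_idPl (leey _)) (min_idPl (leey _)) -EFin_max; congr EFin; case: leP => ?; lra.
- by rewrite (max_idPr (leNye _)) -!EFin_max -EFin_min; congr EFin; repeat case: leP => ?; lra.
Qed.

Lemma clamp_funeneg K M v : (0 <= K)%R -> (0 <= M)%R ->
  maxe (- (clamp (- K) M v)%:E) 0 = mine K%:E (maxe (- v) 0).
Proof.
move=> K0 M0; case: v => [r| |] /=.
- rewrite -!EFin_max -EFin_min; congr EFin.
  by case: (leP r (- K)%R) => ?; case: (leP M r) => ?; repeat case: leP => ?; lra.
- by rewrite (max_idPr (leNye _)) -!EFin_max -EFin_min; congr EFin; repeat case: leP => ?; lra.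
- by rewrite (max_idPl (leey _)) (min_idPl (leey _)) -EFin_max; congr EFin; case: leP => ?; lra.
Qed.

Lemma clamp_add_trunc_le K M v : (0 <= K)%R -> (0 <= M)%R ->
  (clamp (- K) M v)%:E + trunc_le v K <= v.
Proof.
move=> K0 M0; rewrite /trunc_le; case: v => [r| |] /=; rewrite ?leey ?leNye ?addeNy //.
by rewrite lee_fin; case: (leP r (- K)%R) => ?; case: (leP M r) => ?; rewrite -?EFinD lee_fin; lra.
Qed.

Lemma le_clamp_add_trunc_ge K M v : (0 <= K)%R -> (0 <= M)%R ->
  v <= (clamp (- M) K v)%:E + trunc_ge v K.
Proof.
move=> K0 M0; rewrite /trunc_ge; case: v => [r| |] /=; rewrite ?leey ?leNye ?addey //.
by rewrite lee_fin; case: (leP r (- M)%R) => ?; case: (leP K r) => ?; rewrite -?EFinD lee_fin; lra.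
Qed.

Lemma trunc_le_le0 K v : (0 <= K)%R -> trunc_le v K <= 0.
Proof.
by move=> K0; rewrite /trunc_le; case: ifP => // /le_trans; apply; rewrite lee_fin oppr_le0.
Qed.

Lemma trunc_ge_ge0 K v : (0 <= K)%R -> 0 <= trunc_ge v K.
Proof. by move=> K0; rewrite /trunc_ge; case: ifP => // /(le_trans _); apply; rewrite lee_fin. Qed.

Lemma measurable_trunc_le d (T : measurableType d) K (g : T -> \bar R) :
  measurable_fun setT g -> measurable_fun setT (fun x => trunc_le (g x) K).
Proof. by move=> mg; apply: measurable_fun_ifT => //; exact: measurable_fun_lee. Qed.

Lemma measurable_trunc_ge d (T : measurableType d) K (g : T -> \bar R) :
  measurable_fun setT g -> measurable_fun setT (fun x => trunc_ge (g x) K).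
Proof. by move=> mg; apply: measurable_fun_ifT => //; exact: measurable_fun_lee. Qed.

End clamp.

Section bounded_integral.
Context d (T : measurableType d) (R : realType) (mu : probability T R).
Implicit Types (h : T -> R) (a b c : R).

Lemma integral_cst_probability c : \int[mu]_(x in setT) c%:E = c%:E.
Proof.
rewrite (integral_cst mu measurableT c%:E); set m := (X in _ * X).
have -> : m = 1 by exact: probability_setT.
by rewrite mule1.
Qed.

Lemma integrable_bounded h a b : measurable_fun setT h ->
  (forall x, a <= h x <= b)%R -> mu.-integrable setT (EFin \o h).
Proof.
move=> mh hb; apply: measurable_bounded_integrable => //.
  by apply: (@le_lt_trans _ _ 1); [exact: probability_le1 | exact: ltry].
exists (`|a| + `|b|)%R; split; first exact: num_real.
move=> M aM x _ /=; apply: le_trans (ltW aM).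
have /andP[h1 h2] := hb x; have := ler_norm a; have := ler_norm (- a).
have := ler_norm b; have := ler_norm (- b); rewrite !normrN ler_norml.
by move=> *; apply/andP; split; lra.
Qed.

Lemma integral_bounded_fin h a b : measurable_fun setT h ->
  (forall x, a <= h x <= b)%R -> \int[mu]_(x in setT) (h x)%:E \is a fin_num.
Proof. by move=> mh hb; apply: integrable_fin_num => //; exact: integrable_bounded. Qed.

Lemma integralB_cst h a b c : measurable_fun setT h -> (forall x, a <= h x <= b)%R ->
  \int[mu]_(x in setT) (h x - c)%:E = \int[mu]_(x in setT) (h x)%:E - c%:E.
Proof.
move=> mh hb; rewrite -(integral_cst_probability c) -integralB_EFin //.
- exact: integrable_bounded hb.
- by apply: (@integrable_bounded _ c c) => // x; rewrite lexx.
Qed.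

Lemma integral_cstB h a b c : measurable_fun setT h -> (forall x, a <= h x <= b)%R ->
  \int[mu]_(x in setT) (c - h x)%:E = c%:E - \int[mu]_(x in setT) (h x)%:E.
Proof.
move=> mh hb; rewrite -(integral_cst_probability c) -integralB_EFin //.
- by apply: (@integrable_bounded _ c c) => // x; rewrite lexx.
- exact: integrable_bounded hb.
Qed.

Lemma integral_mine_itv (w : T -> \bar R) c : (0 <= c)%R -> measurable_fun setT w ->
  (forall x, 0 <= w x) -> 0 <= \int[mu]_(x in setT) mine c%:E (w x) <= c%:E.
Proof.
move=> c0 mw w0; apply/andP; split.
  by apply: integral_ge0 => x _; rewrite le_min lee_fin c0 w0.
rewrite -[leRHS]integral_cst_probability; apply: ge0_le_integral => //.
- by move=> x _; rewrite le_min lee_fin c0 w0.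
- exact: measurable_mine.
- by move=> x _; rewrite ge_min lexx.
Qed.

Lemma integral_mine_fin (w : T -> \bar R) c : (0 <= c)%R -> measurable_fun setT w ->
  (forall x, 0 <= w x) -> \int[mu]_(x in setT) mine c%:E (w x) \is a fin_num.
Proof.
move=> c0 mw w0; have /andP[I0 Ic] := integral_mine_itv c0 mw w0.
by rewrite ge0_fin_numE // (le_lt_trans Ic) ?ltry.
Qed.

Lemma integral_mine_le (w : T -> \bar R) c : (0 <= c)%R -> measurable_fun setT w ->
  (forall x, 0 <= w x) ->
  \int[mu]_(x in setT) mine c%:E (w x) <= \int[mu]_(x in setT) w x.
Proof.
move=> c0 mw w0; apply: ge0_le_integral => //.
- by move=> x _; rewrite le_min lee_fin c0 w0.
- exact: measurable_mine.
- by move=> x _; rewrite ge_min lexx orbT.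
Qed.

Lemma integral_mine_approx (w : T -> \bar R) (a : \bar R) : measurable_fun setT w ->
  (forall x, 0 <= w x) -> a < \int[mu]_(x in setT) w x ->
  exists2 M : R, (0 <= M)%R & a < \int[mu]_(x in setT) mine M%:E (w x).
Proof.
move=> mw w0; pose ws n x := mine n%:R%:E (w x).
have mws n : measurable_fun setT (ws n) by exact: measurable_mine.
have ws0 n x : setT x -> 0 <= ws n x by move=> _; rewrite le_min lee_fin ler0n w0.
have ws_nd x : setT x -> nondecreasing_seq (ws ^~ x).
  by move=> _ m n mn; apply: le_min2 => //; rewrite lee_fin ler_nat.
have ws_lim x : limn (ws ^~ x) = w x.
  apply: cvg_lim => //; apply: cvgn_ereal_squeeze => t; last first.
    by move=> wt; near=> n; rewrite /ws ge_min (ltW wt) orbT.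
  move=> tw; near=> n; rewrite /ws le_min (ltW tw) andbT lee_fin.
  by apply: ltW; near: n; exact: nbhs_infty_gtr.
have int_nd : nondecreasing_seq (fun n => \int[mu]_(x in setT) ws n x).
  move=> m n mn; apply: ge0_le_integral => //; first exact: ws0.
  by move=> x _; exact: ws_nd.
rewrite (eq_integral (fun x => limn (ws ^~ x))); last by move=> x _; rewrite ws_lim.
rewrite (monotone_convergence _ measurableT mws ws0 ws_nd).
rewrite (cvg_lim _ (ereal_nondecreasing_cvgn int_nd)) //.
by move=> /ereal_sup_gtP [_ [n _ <-] an]; exists n%:R.
Unshelve. all: by end_near.
Qed.

End bounded_integral.

Section expectation.
Context {R : realType} {Xi : pointedType} {dXi : Xi -> Xi -> R}.
Variable mu : probability (borel_type dXi) R.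
Local Notation T := (borel_type dXi).
Implicit Types g h : T -> \bar R.

Lemma EexpE g :
  \int[mu]_(x in [set: T]) g^\+ x != +oo -> Eexp mu g = \int[mu]_(x in [set: T]) g x.
Proof. by move=> h; rewrite /Eexp /= (negbTE h) [RHS]integralE. Qed.

Lemma integral_le_Eexp h g : mu.-integrable setT h -> measurable_fun setT g ->
  (forall x, h x <= g x) -> \int[mu]_(x in [set: T]) h x <= Eexp mu g.
Proof.
move=> /integrableP[mh _] mg hg; rewrite /Eexp /=; case: ifP => _; first exact: leey.
rewrite integralE leeB //; apply: ge0_le_integral => //.
- exact: measurable_funepos.
- exact: measurable_funepos.
- by move=> x _; apply: (funepos_le _ (in_setT x)) => y _; exact: hg.
- exact: measurable_funeneg.
- exact: measurable_funeneg.
- by move=> x _; apply: (funeneg_le _ (in_setT x)) => y _; exact: hg.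
Qed.

Lemma Eexp_le_integral h g : mu.-integrable setT h -> measurable_fun setT g ->
  (forall x, g x <= h x) -> Eexp mu g <= \int[mu]_(x in [set: T]) h x.
Proof.
move=> ih mg hg; have /integrableP[mh _] := ih.
have le_pos : \int[mu]_(x in [set: T]) g^\+ x <= \int[mu]_(x in [set: T]) h^\+ x.
  apply: ge0_le_integral => //; [exact: measurable_funepos|exact: measurable_funepos|].
  by move=> x _; apply: (funepos_le _ (in_setT x)) => y _; exact: hg.
have hfin : \int[mu]_(x in [set: T]) h^\+ x != +oo.
  have := integrable_fin_num measurableT ih; rewrite integralE.
  by rewrite fin_numB => /andP[+ _]; rewrite fin_numE => /andP[].
rewrite EexpE; last by rewrite -ltey (le_lt_trans le_pos) // ltey.
rewrite integralE [leRHS]integralE leeB //; apply: ge0_le_integral => //.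
- exact: measurable_funeneg.
- exact: measurable_funeneg.
- by move=> x _; apply: (funeneg_le _ (in_setT x)) => y _; exact: hg.
Qed.

Lemma integral_clamp_add_Eexp_trunc_le g (K M : R) : (0 <= K)%R -> (0 <= M)%R ->
  measurable_fun setT g ->
  \int[mu]_(x in [set: T]) (clamp (- K) M (g x))%:E +
    Eexp mu (fun x => trunc_le (g x) K) <= Eexp mu g.
Proof.
move=> K0 M0 mg; set b := fun x => trunc_le (g x) K.
have mb : measurable_fun setT b := measurable_trunc_le K mg.
have b0 x : b x <= 0 := trunc_le_le0 _ K0.
have KM : (- K <= M)%R by lra.
have ic := integrable_bounded mu (measurable_clamp KM mg) (fun x => clamp_itv (g x) KM).
have bp : \int[mu]_(x in [set: T]) b^\+ x = 0.
  by rewrite (eq_integral (cst 0)) ?integral0 // => x _; rewrite funeposE; apply/max_idPr.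
rewrite EexpE ?bp //.
have [bn_oo|bn_fin] := eqVneq (\int[mu]_(x in [set: T]) b^\- x) +oo.
  rewrite [X in _ + X]integralE bp bn_oo sub0e.
  by rewrite (_ : - +oo = -oo) // addeNy leNye.
have ib : mu.-integrable setT b.
  apply/integrableP; split => //; rewrite (eq_integral (fun x => b^\- x)) ?ltey //.
  move=> x _; rewrite funenegE /= lee0_abs ?b0 //.
  by apply/esym/max_idPl; rewrite oppe_ge0 b0.
rewrite -(integralD measurableT ic ib).
apply: integral_le_Eexp => //; first exact: integrableD.
by move=> x; exact: clamp_add_trunc_le.
Qed.

Lemma Eexp_le_integral_clamp_add_trunc_ge g (K M : R) : (0 <= K)%R -> (0 <= M)%R ->
  measurable_fun setT g ->
  Eexp mu g <= \int[mu]_(x in [set: T]) (clamp (- M) K (g x))%:E +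
    Eexp mu (fun x => trunc_ge (g x) K).
Proof.
move=> K0 M0 mg; set b := fun x => trunc_ge (g x) K.
have mb : measurable_fun setT b := measurable_trunc_ge K mg.
have b0 x : 0 <= b x := trunc_ge_ge0 _ K0.
have MK : (- M <= K)%R by lra.
have ic := integrable_bounded mu (measurable_clamp MK mg) (fun x => clamp_itv (g x) MK).
have bn : \int[mu]_(x in [set: T]) b^\- x = 0.
  rewrite (eq_integral (cst 0)) ?integral0 // => x _.
  by rewrite funenegE; apply/max_idPr; rewrite oppe_le0 b0.
have [bp_oo|bp_fin] := eqVneq (\int[mu]_(x in [set: T]) b^\+ x) +oo.
  rewrite {2}/Eexp /= bp_oo eqxx addey ?leey //.
  by have := integrable_fin_num measurableT ic; rewrite fin_numE => /andP[].
have ib : mu.-integrable setT b.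
  apply/integrableP; split => //; rewrite (eq_integral (fun x => b^\+ x)) ?ltey //.
  move=> x _; rewrite funeposE /= gee0_abs ?b0 //.
  by apply/esym/max_idPl; rewrite b0.
rewrite [X in _ + X]EexpE // -(integralD measurableT ic ib).
apply: Eexp_le_integral => //; first exact: integrableD.
by move=> x; exact: le_clamp_add_trunc_ge.
Qed.

Lemma integral_clamp g (K M : R) : (0 <= K)%R -> (0 <= M)%R ->
  \int[mu]_(x in [set: T]) (clamp (- K) M (g x))%:E =
  \int[mu]_(x in [set: T]) mine M%:E (g^\+ x) -
  \int[mu]_(x in [set: T]) mine K%:E (g^\- x).
Proof.
move=> K0 M0; rewrite integralE; congr (_ - _); apply: eq_integral => x _.
- by rewrite !funeposE clamp_funepos.
- by rewrite !funenegE clamp_funeneg.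
Qed.

Lemma lt_Eexp_integral_clamp g (K t : R) : (0 <= K)%R -> measurable_fun setT g ->
  t%:E < Eexp mu g ->
  exists2 M : R, (0 <= M)%R & t%:E < \int[mu]_(x in [set: T]) (clamp (- K) M (g x))%:E.
Proof.
move=> K0 mg tE; have mgp := measurable_funepos mg; have mgn := measurable_funeneg mg.
set A := \int[mu]_(x in [set: T]) mine K%:E (g^\- x).
have Afin : A \is a fin_num := integral_mine_fin mu K0 mgn (funeneg_ge0 g).
have tA : t%:E + A < \int[mu]_(x in [set: T]) g^\+ x.
  have [->|gp_fin] := eqVneq (\int[mu]_(x in [set: T]) g^\+ x) +oo.
    by rewrite -(fineK Afin) -EFinD ltry.
  rewrite -lteBrDr //; apply: lt_le_trans tE _; rewrite /Eexp /= (negbTE gp_fin).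
  by apply: leeB => //; exact: integral_mine_le.
have [M M0 HM] := integral_mine_approx mgp (funepos_ge0 g) tA.
by exists M => //; rewrite integral_clamp // lteBrDr.
Qed.

Lemma Eexp_lt_integral_clamp g (K t : R) : (0 <= K)%R -> measurable_fun setT g ->
  Eexp mu g < t%:E ->
  exists2 M : R, (0 <= M)%R & \int[mu]_(x in [set: T]) (clamp (- M) K (g x))%:E < t%:E.
Proof.
move=> K0 mg Et; have mgp := measurable_funepos mg; have mgn := measurable_funeneg mg.
have gp_fin : \int[mu]_(x in [set: T]) g^\+ x != +oo.
  by apply: contraTneq Et => gp_oo; rewrite /Eexp /= gp_oo eqxx ltNge leey.
set B := \int[mu]_(x in [set: T]) mine K%:E (g^\+ x).
have Bfin : B \is a fin_num := integral_mine_fin mu K0 mgp (funepos_ge0 g).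
have Bt : B - t%:E < \int[mu]_(x in [set: T]) g^\- x.
  have [->|gn_fin] := eqVneq (\int[mu]_(x in [set: T]) g^\- x) +oo.
    by rewrite -(fineK Bfin) -EFinB ltry.
  rewrite lteBlDr // -lteBlDl; last by rewrite ge0_fin_numE ?ltey ?integral_ge0.
  apply: le_lt_trans Et; rewrite /Eexp /= (negbTE gp_fin).
  by apply: leeB => //; exact: integral_mine_le.
have [M M0 HM] := integral_mine_approx mgn (funeneg_ge0 g) Bt.
exists M => //; rewrite integral_clamp // lteBlDr; last exact: integral_mine_fin.
by rewrite addeC -lteBlDr.
Qed.

End expectation.

Section limit_notions.
Context {R : realType}.
Implicit Types (c : \bar R) (g : R -> \bar R).

Lemma liminf_K_gt g c : c < liminf_K g -> exists2 K : R, (0 <= K)%R & c < g K.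
Proof.
rewrite /liminf_K => /ereal_sup_gtP [_ [K0 _ <-] cK0].
exists (Num.max K0 0%R); first by rewrite le_max lexx orbT.
apply: (lt_le_trans cK0); apply: ereal_inf_lbound; exists (Num.max K0 0%R) => //=.
by rewrite le_max lexx.
Qed.

Lemma limsup_K_lt g c : limsup_K g < c -> exists2 K : R, (0 <= K)%R & g K < c.
Proof.
rewrite /limsup_K => /ereal_inf_ltP [_ [K0 _ <-] cK0].
exists (Num.max K0 0%R); first by rewrite le_max lexx orbT.
apply: le_lt_trans cK0; apply: ereal_sup_ubound; exists (Num.max K0 0%R) => //=.
by rewrite le_max lexx.
Qed.

Lemma liminf_ny_gt {X : Type} (dX : X -> X -> R) (a : nat -> X -> \bar R) x c :
  c < liminf_ny dX a x -> exists del N, (0 < del)%R /\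
    forall n y, (N <= n)%N -> (dX y x < del)%R -> c < a n y.
Proof.
rewrite /liminf_ny => /ereal_sup_gtP [_ [del [N [del0 ->]]] cN].
exists del, N; split => // n y Nn yx.
by apply: (lt_le_trans cN); apply: ereal_inf_lbound; exists n, y.
Qed.

Lemma liminf_nyz_gt {X Xi : Type} (dX : X -> X -> R) (dXi : Xi -> Xi -> R)
    (fn : nat -> Xi -> X -> \bar R) x xi c :
  c < liminf_nyz dX dXi fn x xi -> exists del N, (0 < del)%R /\
    forall n y z, (N <= n)%N -> (dX y x < del)%R -> (dXi z xi < del)%R -> c < fn n z y.
Proof.
rewrite /liminf_nyz => /ereal_sup_gtP [_ [del [N [del0 ->]]] cN].
exists del, N; split => // n y z Nn yx zxi.
by apply: (lt_le_trans cN); apply: ereal_inf_lbound; exists n, y, z.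
Qed.

Lemma limsup_nz_lt {Xi : Type} (dXi : Xi -> Xi -> R) (a : nat -> Xi -> \bar R) xi c :
  limsup_nz dXi a xi < c -> exists del N, (0 < del)%R /\
    forall n z, (N <= n)%N -> (dXi z xi < del)%R -> a n z < c.
Proof.
rewrite /limsup_nz => /ereal_inf_ltP [_ [del [N [del0 ->]]] cN].
exists del, N; split => // n z Nn zxi.
by apply: le_lt_trans cN; apply: ereal_sup_ubound; exists n, z.
Qed.

Lemma dconv_lt {X : Type} (dX : X -> X -> R) xs x (del : R) : is_metric dX ->
  dconv dX xs x -> (0 < del)%R -> \forall n \near \oo, (dX (xs n) x < del)%R.
Proof.
move=> [d_ge0 _ _ _] /cvgrPdist_lt /[apply]; apply: filterS => n.
by rewrite sub0r normrN ger0_norm.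
Qed.

Lemma dconv_cst {X : Type} (dX : X -> X -> R) x : is_metric dX -> dconv dX (fun=> x) x.
Proof. by move=> [_ d_eq0 _ _]; rewrite /dconv (proj2 (d_eq0 x x)) //; exact: cvg_cst. Qed.

End limit_notions.

Section weak_convergence_bounded.
Context {R : realType} {Xi : pointedType} (dXi : Xi -> Xi -> R).
Hypothesis hd : is_metric dXi.
Local Notation T := (borel_type dXi).

Let d_ge0 x y : (0 <= dXi x y)%R. Proof. by case: hd. Qed.
Let d_xx x : dXi x x = 0%R. Proof. by case: hd => _ h _ _; apply/h. Qed.
Let d_sym x y : dXi x y = dXi y x. Proof. by case: hd. Qed.
Let d_tri x y z : (dXi x z <= dXi x y + dXi y z)%R. Proof. by case: hd. Qed.

Definition below_liminf (us : nat -> Xi -> R) (u : Xi -> R) (x : Xi) : Prop :=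
  forall r : R, (r < u x)%R -> exists del N, (0 < del)%R /\
    forall n z, (N <= n)%N -> (dXi z x < del)%R -> (r < us n z)%R.

Definition above_limsup (us : nat -> Xi -> R) (u : Xi -> R) (x : Xi) : Prop :=
  forall r : R, (u x < r)%R -> exists del N, (0 < del)%R /\
    forall n z, (N <= n)%N -> (dXi z x < del)%R -> (us n z < r)%R.

Lemma dcontinuous_measurable (phi : Xi -> R) : dcontinuous dXi phi ->
  measurable_fun [set: T] (phi : T -> R).
Proof.
move=> phi_cont; apply: (measurability _ (RGenOInfty.measurableE R)).
move=> _ [_ [r ->] <-]; apply: sub_sigma_algebra => x [_ /=].
rewrite in_itv /= andbT => rx.
have [del del0 hdel] := phi_cont x (phi x - r)%R ltac:(by rewrite subr_gt0).
exists del => // y yx; split => //=; rewrite in_itv /= andbT.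
by have := hdel y yx; rewrite ltr_norml => /andP[h1 h2]; lra.
Qed.

Lemma lipschitz_dcontinuous (phi : Xi -> R) (m : R) : (0 <= m)%R ->
  (forall x y, phi x <= phi y + m * dXi x y)%R -> dcontinuous dXi phi.
Proof.
move=> m0 phi_lip x e e0; exists (e / (m + 1))%R; first by apply: divr_gt0 => //; lra.
move=> y yx; have := phi_lip y x; have := phi_lip x y; rewrite (d_sym x y).
have mdel : (m * dXi y x < e)%R.
  move: yx; rewrite ltr_pdivlMr; last by lra.
  by have := d_ge0 y x; nra.
by move=> h1 h2; rewrite ltr_norml; apply/andP; split; lra.
Qed.

Section infconv.
Variables (us : nat -> Xi -> R) (b : R).
Hypothesis us_itv : forall n x, (0 <= us n x <= b)%R.

Definition infconv (m : nat) (x : Xi) : R :=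
  inf [set (us nz.1 nz.2 + m%:R * dXi x nz.2)%R | nz in [set nz : nat * Xi | (m <= nz.1)%N]].

Let infconv_lb m x r :
  (forall n z, (m <= n)%N -> r <= us n z + m%:R * dXi x z)%R -> (r <= infconv m x)%R.
Proof.
move=> H; apply: lb_le_inf; first by exists (us m x + m%:R * dXi x x)%R; exists (m, x) => //=.
by move=> _ [[n z] /= mn <-]; exact: H.
Qed.

Let infconv_ub m x n z : (m <= n)%N -> (infconv m x <= us n z + m%:R * dXi x z)%R.
Proof.
move=> mn; apply: ge_inf; last by exists (n, z).
exists 0%R => _ [[k y] /= _ <-]; have /andP[uk _] := us_itv k y.
by apply: addr_ge0 => //; exact: mulr_ge0.
Qed.

Lemma infconv_le m n x : (m <= n)%N -> (infconv m x <= us n x)%R.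
Proof. by move=> mn; have := infconv_ub x x mn; rewrite d_xx mulr0 addr0. Qed.

Lemma infconv_itv m x : (0 <= infconv m x <= b)%R.
Proof.
apply/andP; split; last by apply: le_trans (infconv_le x (leqnn m)) _; case/andP: (us_itv m x).
apply: infconv_lb => n z _; have /andP[un _] := us_itv n z.
by apply: addr_ge0 => //; exact: mulr_ge0.
Qed.

Lemma infconv_lipschitz m x y : (infconv m x <= infconv m y + m%:R * dXi x y)%R.
Proof.
rewrite -lerBlDr; apply: infconv_lb => n z mn; rewrite lerBlDr.
apply: le_trans (infconv_ub x z mn) _.
by rewrite -addrA lerD2l -mulrDr ler_wpM2l // addrC.
Qed.

Lemma infconv_nondecreasing x : nondecreasing_seq (infconv ^~ x).
Proof.
apply/nondecreasing_seqP => m; apply: infconv_lb => n z mn.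
apply: le_trans (infconv_ub x z (ltnW mn)) _.
by rewrite lerD2l ler_wpM2r // ler_nat.
Qed.

Lemma infconv_dcontinuous m : dcontinuous dXi (infconv m).
Proof. by apply: (@lipschitz_dcontinuous _ m%:R) => //; exact: infconv_lipschitz. Qed.

(* Far from [x] the penalty [m d(x, z)] exceeds [r]; near [x] the values of [us] do. *)
Lemma infconv_below_liminf u x r : below_liminf us u x -> (r < u x)%R ->
  exists m, (r <= infconv m x)%R.
Proof.
move=> /[apply] [[del [N [del0 HN]]]].
have [M _ HM] := nbhs_infty_gtr (r / del)%R.
exists (maxn N M); apply: infconv_lb => n z mn.
have /andP[un _] := us_itv n z.
have [zx|zx] := ltP (dXi z x) del.
  have := HN n z (leq_trans (leq_maxl N M) mn) zx.
  by have := mulr_ge0 (ler0n _ (maxn N M)) (d_ge0 x z); lra.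
have := HM M (leqnn M); rewrite ltr_pdivrMr // => rM.
have MNM : (M%:R <= (maxn N M)%:R :> R)%R by rewrite ler_nat leq_maxr.
rewrite d_sym in zx; have := ler_wpM2r (ler0n _ (maxn N M)) zx.
by have := d_ge0 x z; nra.
Qed.

End infconv.

Variables (P : probability T R) (Pn : nat -> probability T R).
Hypothesis hweak : weak_conv Pn P.

Lemma integral_le_sup_infconv (us : nat -> Xi -> R) (u : Xi -> R) (b : R) :
  (forall n x, (0 <= us n x <= b)%R) -> measurable_fun [set: T] (u : T -> R) ->
  (forall x, 0 <= u x)%R -> (\forall x \ae P, below_liminf us u x) ->
  \int[P]_(x in [set: T]) (u x)%:E <=
    ereal_sup (range (fun m => \int[P]_(x in [set: T]) (infconv us m x)%:E)).
Proof.
move=> us_itv mu u0 hae; pose g m x := (infconv us m x)%:E.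
have mg m : measurable_fun [set: T] (g m).
  apply/measurable_EFinP; exact: dcontinuous_measurable (infconv_dcontinuous us_itv m).
have g0 m x : [set: T] x -> 0 <= g m x.
  by move=> _; rewrite lee_fin; case/andP: (infconv_itv us_itv m x).
have g_nd x : [set: T] x -> nondecreasing_seq (g ^~ x).
  by move=> _ m n mn; rewrite lee_fin (infconv_nondecreasing us_itv).
have int_nd : nondecreasing_seq (fun m => \int[P]_(x in [set: T]) g m x).
  move=> m n mn; apply: ge0_le_integral => //; first exact: g0.
  by move=> x _; exact: g_nd.
have g_lim x : limn (g ^~ x) = ereal_sup (range (g ^~ x)).
  exact/cvg_lim/ereal_nondecreasing_cvgn/g_nd.
apply: (@le_trans _ _ (\int[P]_(x in [set: T]) limn (g ^~ x))); last first.
  rewrite (monotone_convergence _ measurableT mg g0 g_nd).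
  by rewrite (cvg_lim _ (ereal_nondecreasing_cvgn int_nd)).
apply: ae_ge0_le_integral => //.
- by move=> x _; rewrite lee_fin.
- exact/measurable_EFinP.
- move=> x _; rewrite g_lim; apply: le_trans (g0 0%N x I) _.
  by apply: ereal_sup_ubound; exists 0%N.
- apply: (emeasurable_fun_cvg _ _ mg) => x _.
  exact: ereal_nondecreasing_is_cvgn (g_nd x I).
have P_filter := ae_filter_ringOfSetsType P.
apply: filterS hae => x hx _; apply: lee_reals => r; rewrite lte_fin => ru.
have [m rm] := infconv_below_liminf us_itv hx ru.
rewrite g_lim; apply: le_trans (ereal_sup_ubound _); last by exists m.
by rewrite lee_fin.
Qed.

Lemma weak_conv_integral_liminf0 (us : nat -> Xi -> R) (u : Xi -> R) (b : R) :
  (forall n, measurable_fun [set: T] (us n : T -> R)) ->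
  measurable_fun [set: T] (u : T -> R) ->
  (forall n x, (0 <= us n x <= b)%R) -> (forall x, (0 <= u x <= b)%R) ->
  (\forall x \ae P, below_liminf us u x) ->
  forall eta : R, (0 < eta)%R -> \forall n \near \oo,
    \int[P]_(x in [set: T]) (u x)%:E - eta%:E <= \int[Pn n]_(x in [set: T]) (us n x)%:E.
Proof.
move=> mus mu us_itv u_itv hae eta eta0.
have u0 x : (0 <= u x)%R by case/andP: (u_itv x).
have ufin := integral_bounded_fin P mu u_itv.
have : \int[P]_(x in [set: T]) (u x)%:E - eta%:E <
    ereal_sup (range (fun m => \int[P]_(x in [set: T]) (infconv us m x)%:E)).
  apply: lt_le_trans (integral_le_sup_infconv us_itv mu u0 hae).
  by rewrite lteBlDr // lteDl // lte_fin.
move=> /ereal_sup_gtP [_ [m _ <-] hm].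
have infconv_bnd : exists M : R, forall x, (`|infconv us m x| <= M)%R.
  by exists b => x; rewrite ger0_norm; case/andP: (infconv_itv us_itv m x).
have := cvgn_gt (hweak (infconv_dcontinuous us_itv m) infconv_bnd) hm.
have mn : \forall n \near \oo, (m <= n)%N by exists m.
apply: filterS2 mn => n mn /ltW /le_trans; apply.
apply: ge0_le_integral => //.
- by move=> x _; rewrite lee_fin; case/andP: (infconv_itv us_itv m x).
- by apply/measurable_EFinP; exact: dcontinuous_measurable (infconv_dcontinuous us_itv m).
- exact/measurable_EFinP.
- by move=> x _; rewrite lee_fin (infconv_le us_itv).
Qed.

Lemma weak_conv_integral_liminf (us : nat -> Xi -> R) (u : Xi -> R) (a b : R) :
  (forall n, measurable_fun [set: T] (us n : T -> R)) ->
  measurable_fun [set: T] (u : T -> R) ->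
  (forall n x, (a <= us n x <= b)%R) -> (forall x, (a <= u x <= b)%R) ->
  (\forall x \ae P, below_liminf us u x) ->
  forall eta : R, (0 < eta)%R -> \forall n \near \oo,
    \int[P]_(x in [set: T]) (u x)%:E - eta%:E <= \int[Pn n]_(x in [set: T]) (us n x)%:E.
Proof.
move=> mus mu us_itv u_itv hae eta eta0; have P_filter := ae_filter_ringOfSetsType P.
have itvB c : (a <= c <= b)%R -> (0 <= c - a <= b - a)%R.
  by move=> /andP[? ?]; apply/andP; split; lra.
have hae' : \forall x \ae P, below_liminf (fun n z => us n z - a)%R (fun z => u z - a)%R x.
  apply: filterS hae => x hx r rux; have [|del [N [del0 HN]]] := hx (r + a)%R; first lra.
  by exists del, N; split => // n z Nn zx; have := HN n z Nn zx; lra.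
have := weak_conv_integral_liminf0 (fun n => measurable_funB (mus n) (measurable_cst a))
  (measurable_funB mu (measurable_cst a)) (fun n x => itvB _ (us_itv n x))
  (fun x => itvB _ (u_itv x)) hae' eta0.
apply: filterS => n; rewrite (integralB_cst P a mu u_itv) (integralB_cst (Pn n) a (mus n) (us_itv n)).
have f1 := integral_bounded_fin P mu u_itv; have f2 := integral_bounded_fin (Pn n) (mus n) (us_itv n).
by rewrite -(fineK f1) -(fineK f2) -!EFinB !lee_fin; lra.
Qed.

Lemma weak_conv_integral_limsup (us : nat -> Xi -> R) (u : Xi -> R) (a b : R) :
  (forall n, measurable_fun [set: T] (us n : T -> R)) ->
  measurable_fun [set: T] (u : T -> R) ->
  (forall n x, (a <= us n x <= b)%R) -> (forall x, (a <= u x <= b)%R) ->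
  (\forall x \ae P, above_limsup us u x) ->
  forall eta : R, (0 < eta)%R -> \forall n \near \oo,
    \int[Pn n]_(x in [set: T]) (us n x)%:E <= \int[P]_(x in [set: T]) (u x)%:E + eta%:E.
Proof.
move=> mus mu us_itv u_itv hae eta eta0; have P_filter := ae_filter_ringOfSetsType P.
have itvB c : (a <= c <= b)%R -> (0 <= b - c <= b - a)%R.
  by move=> /andP[? ?]; apply/andP; split; lra.
have hae' : \forall x \ae P, below_liminf (fun n z => b - us n z)%R (fun z => b - u z)%R x.
  apply: filterS hae => x hx r rux; have [|del [N [del0 HN]]] := hx (b - r)%R; first lra.
  by exists del, N; split => // n z Nn zx; have := HN n z Nn zx; lra.
have := weak_conv_integral_liminf0 (fun n => measurable_funB (measurable_cst b) (mus n))
  (measurable_funB (measurable_cst b) mu) (fun n x => itvB _ (us_itv n x))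
  (fun x => itvB _ (u_itv x)) hae' eta0.
apply: filterS => n; rewrite (integral_cstB P b mu u_itv) (integral_cstB (Pn n) b (mus n) (us_itv n)).
have f1 := integral_bounded_fin P mu u_itv; have f2 := integral_bounded_fin (Pn n) (mus n) (us_itv n).
by rewrite -(fineK f1) -(fineK f2) -!EFinB -EFinD !lee_fin; lra.
Qed.

End weak_convergence_bounded.

Section epi_bounds.
Context {R : realType} {X : Type} {Xi : pointedType}.
Variables (dX : X -> X -> R) (dXi : Xi -> Xi -> R).
Hypotheses (hdX : is_metric dX) (hdXi : is_metric dXi).
Local Notation T := (borel_type dXi).
Variables (P : probability T R) (Pn : nat -> probability T R).
Hypothesis hweak : weak_conv Pn P.
Variables (f : Xi -> X -> \bar R) (fn : nat -> Xi -> X -> \bar R).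
Hypothesis ha : forall x : X,
  measurable_fun [set: T] (fun xi : T => f xi x) /\
  (forall n, measurable_fun [set: T] (fun xi : T => fn n xi x)).

Lemma below_liminf_clamp x xs xi (K M : R) : (- K <= M)%R -> dconv dX xs x ->
  f xi x <= liminf_nyz dX dXi fn x xi ->
  below_liminf dXi (fun n z => clamp (- K) M (fn n z (xs n))) (fun z => clamp (- K) M (f z x)) xi.
Proof.
move=> KM hxs fxi r; have [rK _|Kr] := ltP r (- K)%R.
  exists 1%R, 0%N; split => // n z _ _.
  by have /andP[+ _] := clamp_itv (fn n z (xs n)) KM; lra.
move=> /(clamp_gtP _ KM Kr) [rM rf].
have [del [N [del0 HN]]] := liminf_nyz_gt (lt_le_trans rf fxi).
have [N' _ HN'] := dconv_lt hdX hxs del0.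
exists del, (maxn N N'); split => // n z Nn zxi; apply/(clamp_gtP _ KM Kr); split => //.
apply: HN => //; first exact: leq_trans (leq_maxl N N') Nn.
by apply: HN'; exact: leq_trans (leq_maxr N N') Nn.
Qed.

Lemma above_limsup_clamp x xs xi (K M : R) : (- M <= K)%R ->
  limsup_nz dXi (fun n z => fn n z (xs n)) xi <= f xi x ->
  above_limsup dXi (fun n z => clamp (- M) K (fn n z (xs n))) (fun z => clamp (- M) K (f z x)) xi.
Proof.
move=> MK fxi r; have [Kr _|rK] := ltP K r.
  exists 1%R, 0%N; split => // n z _ _.
  by have /andP[_ +] := clamp_itv (fn n z (xs n)) MK; lra.
move=> /(clamp_ltP _ MK rK) [Mr fr].
have [del [N [del0 HN]]] := limsup_nz_lt (le_lt_trans fxi fr).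
exists del, N; split => // n z Nn zxi; apply/(clamp_ltP _ MK rK); split => //.
exact: HN.
Qed.

Hypothesis hb : forall x : X,
  liminf_K (fun K => liminf_ny dX
    (fun n y => Eexp (Pn n) (fun xi => trunc_le (fn n xi y) K)) x) = 0.
Hypothesis hc : forall x : X, \forall xi \ae P, f xi x <= liminf_nyz dX dXi fn x xi.

Lemma Eexp_lower_bound x xs : dconv dX xs x ->
  forall t : R, t%:E < Eexp P (fun xi => f xi x) ->
  \forall n \near \oo, t%:E <= Eexp (Pn n) (fun xi => fn n xi (xs n)).
Proof.
move=> hxs t /ereal_dense [t' /andP[tt' t'E]]; rewrite lte_fin in tt'.
pose eps := ((t' - t) / 2)%R; have eps0 : (0 < eps)%R by rewrite /eps; lra.
have [K K0 HK] :
    exists2 K : R, (0 <= K)%R & (- eps)%:E < liminf_ny dX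
      (fun n y => Eexp (Pn n) (fun xi => trunc_le (fn n xi y) K)) x.
  by apply: liminf_K_gt; rewrite hb lte_fin oppr_lt0.
have [del [N [del0 HN]]] := liminf_ny_gt HK.
have mf := (ha x).1; have mfn n := (ha (xs n)).2 n.
have [M M0 HM] := lt_Eexp_integral_clamp K0 mf t'E.
have KM : (- K <= M)%R by lra.
have P_filter := ae_filter_ringOfSetsType P.
have hae : \forall xi \ae P, below_liminf dXi (fun n z => clamp (- K) M (fn n z (xs n)))
    (fun z => clamp (- K) M (f z x)) xi.
  by apply: filterS (hc x) => xi; exact: below_liminf_clamp.
have := weak_conv_integral_liminf hdXi hweak (fun n => measurable_clamp KM (mfn n))
  (measurable_clamp KM mf) (fun n xi => clamp_itv _ KM) (fun xi => clamp_itv _ KM) hae eps0.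
have Nn : \forall n \near \oo, (N <= n)%N by exists N.
apply: filterS3 Nn (dconv_lt hdX hxs del0) => n Nn dn clamp_n.
apply: le_trans (integral_clamp_add_Eexp_trunc_le (Pn n) K0 M0 (mfn n)).
rewrite (_ : t = t' - eps - eps)%R; last by rewrite /eps; lra.
rewrite EFinB; apply/ltW/lteD; last exact: HN.
by apply: lt_le_trans clamp_n; rewrite EFinB lteD2rE ?fin_numN.
Qed.

Lemma Eexp_upper_bound x xs :
  limsup_K (fun K => limn_esup
    (fun n => Eexp (Pn n) (fun xi => trunc_ge (fn n xi (xs n)) K))) = 0 ->
  (\forall xi \ae P, limsup_nz dXi (fun n z => fn n z (xs n)) xi <= f xi x) ->
  forall t : R, Eexp P (fun xi => f xi x) < t%:E ->
  \forall n \near \oo, Eexp (Pn n) (fun xi => fn n xi (xs n)) <= t%:E.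
Proof.
move=> hi hii t /ereal_dense [t' /andP[Et' t't]]; rewrite lte_fin in t't.
pose eps := ((t - t') / 2)%R; have eps0 : (0 < eps)%R by rewrite /eps; lra.
have [K K0 /limn_esup_lt HK] : exists2 K : R, (0 <= K)%R & limn_esup
    (fun n => Eexp (Pn n) (fun xi => trunc_ge (fn n xi (xs n)) K)) < eps%:E.
  by apply: limsup_K_lt; rewrite hi lte_fin.
have mf := (ha x).1; have mfn n := (ha (xs n)).2 n.
have [M M0 HM] := Eexp_lt_integral_clamp K0 mf Et'.
have MK : (- M <= K)%R by lra.
have P_filter := ae_filter_ringOfSetsType P.
have hae : \forall xi \ae P, above_limsup dXi (fun n z => clamp (- M) K (fn n z (xs n)))
    (fun z => clamp (- M) K (f z x)) xi.
  by apply: filterS hii => xi; exact: above_limsup_clamp.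
have := weak_conv_integral_limsup hdXi hweak (fun n => measurable_clamp MK (mfn n))
  (measurable_clamp MK mf) (fun n xi => clamp_itv _ MK) (fun xi => clamp_itv _ MK) hae eps0.
apply: filterS2 HK => n trunc_n clamp_n.
apply: le_trans (Eexp_le_integral_clamp_add_trunc_ge (Pn n) K0 M0 (mfn n)) _.
rewrite (_ : t = t' + eps + eps)%R; last by rewrite /eps; lra.
rewrite EFinD; apply/ltW/lteD => //.
by apply: le_lt_trans clamp_n _; rewrite EFinD lteD2rE.
Qed.

End epi_bounds.

Theorem theorem3p7 (R : realType) (X : Type) (Xi : pointedType)
  (dX : X -> X -> R) (dXi : Xi -> Xi -> R)
  (hdX : is_metric dX) (hdXi : is_metric dXi)
  (P : probability (borel_type dXi) R)
  (Pn : nat -> probability (borel_type dXi) R)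
  (hweak : weak_conv Pn P)
  (f : Xi -> X -> \bar R) (fn : nat -> Xi -> X -> \bar R)
  (ha : forall x : X,
      measurable_fun [set: borel_type dXi] (fun xi : borel_type dXi => f xi x) /\
      (forall n, measurable_fun [set: borel_type dXi] (fun xi : borel_type dXi => fn n xi x)))
  (hb : forall x : X,
      liminf_K (fun K => liminf_ny dX
        (fun n y => Eexp (Pn n) (fun xi => trunc_le (fn n xi y) K)) x) = 0)
  (hc : forall x : X,
      \forall xi \ae P, (f xi x <= liminf_nyz dX dXi fn x xi)%E)
  (hrec : forall x : X,
      Eexp P (fun xi => f xi x) = +oo \/
      exists xs : nat -> X, [/\ dconv dX xs x,
        limsup_K (fun K => limn_esup
          (fun n => Eexp (Pn n) (fun xi => trunc_ge (fn n xi (xs n)) K))) = 0 &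
        \forall xi \ae P,
          (limsup_nz dXi (fun n z => fn n z (xs n)) xi <= f xi x)%E]) :
  epi_converges dX (fun n x => Eexp (Pn n) (fun xi => fn n xi x))
    (fun x => Eexp P (fun xi => f xi x)).
Proof.
have lower := Eexp_lower_bound hdX hdXi hweak ha hb hc.
move=> x; split => [xs hxs|]; first by apply: limn_einf_ge; exact: lower.
have [Ef_oo|[xs [hxs hi hii]]] := hrec x.
  exists (fun=> x); first exact: dconv_cst.
  apply: cvgn_ereal_squeeze => t; first exact/lower/dconv_cst.
  by rewrite Ef_oo ltNge leey.
exists xs => //; apply: cvgn_ereal_squeeze => t; first exact: lower.
exact: (Eexp_upper_bound hdXi hweak ha hi hii).
Qed.
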